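(* In the setting of the context, assume (G1) and (G2). 1. If (G3) holds, then ($\overline{G}_3$) holds. 2. If $X_0\neq X$ and ($\overline{G}_3$) holds, then (G3) holds. Here (G3): there exists $c_2\ge1$ such that $\operatorname{cap}U(x,r)\ge c_2^{-1}g(r)^{-1}$ for all $x\in X_0$ and $0<r<R_0(x)$; and ($\overline G_3$): there exists $c_2\ge1$ such that for all $x\in X_0$, $0<r<R_0(x)$ and $y\in X\setminus U(x,r)$, $\|\varepsilon_y^{\overline{U(x,r)}}\|\ge c_2^{-1}g(r)^{-1}G(y,x)$.
   Context: $(X,\rho)$ is a separable metric space, $X_0\subseteq X$ open; $\mathcal M(X)$ is the set of finite Borel measures (extended to universally measurable sets), $\|\mu\|:=\mu(X)$, $\varepsilon_x$ the Dirac measure. For every open $U\subseteq X$ and $x\in X$ a measure $\mu_x^U\in\mathcal M(X)$ is given such that for all open $U,V$ and all $x$: $\mu_x^U(U)=0$, $\|\mu_x^U\|\le1$, $\mu_x^U=\varepsilon_x$ if $x\notin U$; $y\mapsto\mu_y^U(E)$ is universally measurable for Borel $E$; and $\mu_x^U=\int\mu_y^U\,d\mu_x^V(y)$ if $V\subseteq U$. For closed $A$, $\varepsilon_x^A:=\mu_x^{X\setminus A}$. $\mathcal U(X_0)$ is the set of open $U$ with $\overline U\subseteq X_0$; $U(x,r)$ the open ball; $R_0(x):=\sup\{r>0:\overline{U(x,r)}\subseteq X_0\}$ for $x\in X_0$. $G\colon X\times X\to(0,\infty]$ is Borel, $G\mu(x):=\int G(x,y)\,d\mu(y)$, and $\operatorname{cap}A:=\sup\{\|\mu\|:\mu\in\mathcal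 M(X),\ \mu(X\setminus A)=0,\ G\mu\le1\}$. (G1): there exists $c_1\ge1$ such that for all $U\in\mathcal U(X_0)$, $x\in U$, $\delta>0$ and every closed $A\subseteq U$ there are a closed neighborhood $B\subseteq U$ of $A$ and a measure $\nu$ carried by $B$ with $\|\varepsilon_x^B\|-\delta<c_1\|\varepsilon_x^A\|$ and $\|\varepsilon_y^A\|\le G\nu(y)\le c_1\|\varepsilon_y^B\|$ for all $y\in X$. (G2): there are a strictly decreasing continuous $g\colon[0,\infty)\to(0,\infty]$ and constants $c,c_D,M_0\in[1,\infty)$, $\alpha_0\in(0,1)$ such that for all $r>0$, $g(r/2)\le c_Dg(r)$, $M_0g(r)\le g(\alpha_0r)$, and $c^{-1}g\circ\rho\le G\le c\,g\circ\rho$ on $X\times X$. *)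

From HB Require Import structures.
From mathcomp Require Import all_boot all_order all_algebra.
From mathcomp Require Import all_classical all_reals all_analysis.
From mathcomp Require Import measurable_realfun.
Set Implicit Arguments. Unset Strict Implicit. Unset Printing Implicit Defensive.
Import Order.TTheory GRing.Theory Num.Theory.
Import numFieldNormedType.Exports.
Local Open Scope classical_set_scope.
Local Open Scope ring_scope.

Section Metric.
Context {R : realType} {X : Type} (rho : X -> X -> R).

Definition is_metric : Prop :=
  [/\ (forall x y, 0 <= rho x y),
      (forall x y, rho x y = 0 <-> x = y),
      (forall x y, rho x y = rho y x) &
      (forall x y z, rho x z <= rho x y + rho y z)].

Definition rball (x : X) (r : R) : set X := [set y | rho x y < r].

Definition ropen (A : set X) : Prop :=
  forall x, A x -> exists2 r : R, 0 < r & rball x r `<=` A.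

Definition rclosed (A : set X) : Prop := ropen (~` A).

Definition rclosure (A : set X) : set X :=
  [set x | forall r : R, 0 < r -> exists y, A y /\ rho x y < r].

Definition rnbhd (A B : set X) : Prop :=
  forall x, A x -> exists2 r : R, 0 < r & rball x r `<=` B.

Definition rseparable : Prop :=
  exists D : set X, countable D /\ rclosure D = setT.

Definition Uclass (X0 : set X) (U : set X) : Prop :=
  ropen U /\ rclosure U `<=` X0.

Definition R0 (X0 : set X) (x : X) : \bar R :=
  ereal_sup [set r%:E | r in [set r : R | 0 < r /\ rclosure (rball x r) `<=` X0]].

End Metric.

Section Meas.
Local Open Scope ereal_scope.
Context {R : realType} {d : measure_display} {X : measurableType d}.

(* universally measurable sets: measurable for the completion of every
   finite Borel measure (Caratheodory sigma-algebra of its outer measure) *)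
Definition univ_measurable (A : set X) : Prop :=
  forall m : {finite_measure set X -> \bar R}, (m^*)%mu.-cara.-measurable A.

Definition univ_measurable_fun (f : X -> \bar R) : Prop :=
  forall (m : {finite_measure set X -> \bar R}) (B : set (\bar R)),
    measurable B -> (m^*)%mu.-cara.-measurable (f @^-1` B).

(* integral w.r.t. (the completion of) a finite measure; used for
   universally measurable integrands *)
Definition uintegral (m : {finite_measure set X -> \bar R}) (f : X -> \bar R)
  : \bar R :=
  \int[@completed_measure_extension _ _ R m]_y f y.

Definition mass (m : {finite_measure set X -> \bar R}) : \bar R := m setT.

Definition harmonic_kernel (rho : X -> X -> R)
    (mu : set X -> X -> {finite_measure set X -> \bar R}) : Prop :=
  forall U V : set X, ropen rho U -> ropen rho V -> forall x : X,
  [/\ mu U x U = 0,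
      mass (mu U x) <= 1,
      (~ U x -> forall E, measurable E -> mu U x E = \d_x E),
      (forall E, measurable E -> univ_measurable_fun (fun y => mu U y E)) &
      (V `<=` U -> forall E, measurable E ->
         mu U x E = uintegral (mu V x) (fun y => mu U y E))].

Definition epsA (mu : set X -> X -> {finite_measure set X -> \bar R})
  (A : set X) (x : X) : {finite_measure set X -> \bar R} := mu (~` A) x.

Definition Gpot (G : X -> X -> \bar R) (m : {finite_measure set X -> \bar R})
  (x : X) : \bar R := \int[m]_y G x y.

Definition capacity (G : X -> X -> \bar R) (A : set X) : \bar R :=
  ereal_sup [set mass m | m in
    [set m : {finite_measure set X -> \bar R} |
       m (~` A) = 0 /\ forall x, Gpot G m x <= 1]].

Definition G1 (rho : X -> X -> R) (X0 : set X)
    (mu : set X -> X -> {finite_measure set X -> \bar R})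
    (G : X -> X -> \bar R) : Prop :=
  exists c1 : R, (1 <= c1)%R /\
  forall (U : set X) (x : X) (delta : R) (A : set X),
    Uclass rho X0 U -> U x -> (0 < delta)%R -> rclosed rho A -> A `<=` U ->
    exists (B : set X) (nu : {finite_measure set X -> \bar R}),
      [/\ rclosed rho B, B `<=` U, rnbhd rho A B & nu (~` B) = 0] /\
      mass (epsA mu B x) - delta%:E < c1%:E * mass (epsA mu A x) /\
          (forall y, mass (epsA mu A y) <= Gpot G nu y /\
                    Gpot G nu y <= c1%:E * mass (epsA mu B y)).

(* (G2), with the function g and the constants given explicitly *)
Definition G2 (rho : X -> X -> R) (G : X -> X -> \bar R) (g : R -> \bar R)
    (c cD M0 alpha0 : R) : Prop :=
  [/\ (forall r s : R, (0 <= r)%R -> (r < s)%R -> g s < g r),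
      {within `[0%R, +oo[%classic, continuous g} &
      (forall r : R, (0 <= r)%R -> 0 < g r)] /\
  [/\ (1 <= c)%R, (1 <= cD)%R, (1 <= M0)%R & (0 < alpha0 < 1)%R] /\
  [/\ (forall r : R, (0 < r)%R -> g (r / 2)%R <= cD%:E * g r),
      (forall r : R, (0 < r)%R -> M0%:E * g r <= g (alpha0 * r)%R) &
      (forall x y : X, (c^-1)%:E * g (rho x y) <= G x y /\
                       G x y <= c%:E * g (rho x y))].

Definition G3 (rho : X -> X -> R) (X0 : set X) (G : X -> X -> \bar R)
    (g : R -> \bar R) : Prop :=
  exists c2 : R, (1 <= c2)%R /\
  forall (x : X) (r : R), X0 x -> (0 < r)%R -> r%:E < R0 rho X0 x ->
    (c2^-1 * (fine (g r))^-1)%:E <= capacity G (rball rho x r).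

Definition G3bar (rho : X -> X -> R) (X0 : set X)
    (mu : set X -> X -> {finite_measure set X -> \bar R})
    (G : X -> X -> \bar R) (g : R -> \bar R) : Prop :=
  exists c2 : R, (1 <= c2)%R /\
  forall (x : X) (r : R) (y : X), X0 x -> (0 < r)%R -> r%:E < R0 rho X0 x ->
    ~ rball rho x r y ->
    (c2^-1 * (fine (g r))^-1)%:E * G y x
      <= mass (epsA mu (rclosure rho (rball rho x r)) y).

End Meas.

(* Both implications rest on the measure nu that (G1) attaches to a closed
   ball A = cl U(x, t/2) inside U(x, t): nu lives on a closed B inside U(x, t)
   and ||eps_z^A|| <= G nu (z) <= c1 ||eps_z^B||.  Since ||eps_z^A|| = 1 on A,
   Fubini and the quasi-symmetry G(z, w) <= c^2 G(w, z) coming from (G2) give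
   cap U(x, t/2) <= c^2 ||nu||; and nu / c1 is admissible for cap U(x, t), so
   cap U(x, t) >= ||nu|| / c1.  For y far from B, (G2) and the doubling of g
   make G nu (y) comparable to g(rho(x, y)) ||nu||, hence to G(y, x) ||nu||.
   Thus (G3) bounds ||nu|| from below, and with G nu (y) <= c1 ||eps_y^B|| this
   bounds ||eps_y^{cl U(x, r)}|| from below by G(y, x) / g(r).  Conversely,
   (Gbar3) at a point y0 outside X0, which is far from x, bounds ||nu|| and
   hence cap U(x, r) from below by 1 / g(r). *)

From HB Require Import structures.
From mathcomp Require Import all_boot all_order all_algebra.
From mathcomp Require Import all_classical all_reals all_analysis.
From mathcomp Require Import measurable_realfun.
From mathcomp Require Import ring lra.
Import Order.TTheory GRing.Theory Num.Theory.
Import numFieldNormedType.Exports.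
Set Implicit Arguments. Unset Strict Implicit. Unset Printing Implicit Defensive.
Local Open Scope classical_set_scope.
Local Open Scope ring_scope.

Section MetricBalls.
Context {R : realType} {X : Type} (rho : X -> X -> R).
Hypothesis rho_metric : is_metric rho.

Lemma rho_ge0 x y : 0 <= rho x y. Proof. by case: rho_metric. Qed.
Lemma rhoC x y : rho x y = rho y x. Proof. by case: rho_metric. Qed.
Lemma rho_triangle x y z : rho x z <= rho x y + rho y z.
Proof. by case: rho_metric. Qed.
Lemma rhoxx x : rho x x = 0. Proof. by case: rho_metric => _ h _ _; apply/h. Qed.

Lemma rball_center x r : 0 < r -> rball rho x r x.
Proof. by rewrite /rball /= rhoxx. Qed.

Lemma rball_open x r : ropen rho (rball rho x r).
Proof.
move=> y; rewrite /rball /= => hy; exists (r - rho x y); first by rewrite subr_gt0.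
by move=> z; rewrite /rball /= => hz; have := rho_triangle x y z; lra.
Qed.

Lemma rclosure_closed A : rclosed rho (rclosure rho A).
Proof.
move=> x /= hx.
have [r r0 hr] : exists2 r : R, 0 < r & forall y, A y -> r <= rho x y.
  apply: contrapT => hn; apply: hx => r r0; apply: contrapT => hne.
  apply: hn; exists r => // y Ay; rewrite leNgt; apply/negP => hlt.
  by apply: hne; exists y.
have r2 : 0 < r / 2 by rewrite divr_gt0.
exists (r / 2) => // z; rewrite /rball /= => hz hcl.
have [y [Ay hy]] := hcl _ r2.
by have := hr y Ay; have := rho_triangle x z y; lra.
Qed.

Lemma subset_rclosure A : A `<=` rclosure rho A.
Proof. by move=> x Ax r r0; exists x; rewrite rhoxx. Qed.

Lemma rclosureS A B : A `<=` B -> rclosure rho A `<=` rclosure rho B.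
Proof. by move=> AB x h r /h[y [/AB By ?]]; exists y. Qed.

Lemma rclosure_rball_le x s z : rclosure rho (rball rho x s) z -> rho x z <= s.
Proof.
move=> h; rewrite leNgt; apply/negP => hlt.
have sz : 0 < rho x z - s by rewrite subr_gt0.
have [y [+ hzy]] := h _ sz.
rewrite /rball /= => hy; have := rho_triangle x y z; rewrite (rhoC y z); lra.
Qed.

Lemma rclosure_rballS x r s : r <= s ->
  rclosure rho (rball rho x r) `<=` rclosure rho (rball rho x s).
Proof. by move=> rs; apply: rclosureS => z; rewrite /rball /=; lra. Qed.

Lemma rclosure_rball_sub x r s : r < s ->
  rclosure rho (rball rho x r) `<=` rball rho x s.
Proof. by move=> rs z /rclosure_rball_le; rewrite /rball /=; lra. Qed.

End MetricBalls.

Arguments rball_open {R X rho} rho_metric x r.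
Arguments rclosure_closed {R X rho} rho_metric A.

Lemma R0_gt {R : realType} {X : Type} (rho : X -> X -> R) (X0 : set X) x (r : R) :
  (r%:E < R0 rho X0 x)%E ->
  exists2 s : R, r < s & rclosure rho (rball rho x s) `<=` X0.
Proof. by move=> /ereal_sup_gt [_ [s [s0 hs] <-]]; rewrite lte_fin => rs; exists s. Qed.

Section CarriedMeasures.
Local Open Scope ereal_scope.
Context {R : realType} {d : measure_display} {X : measurableType d}.
Implicit Types (nu : {finite_measure set X -> \bar R}) (B : set X) (f : X -> \bar R).

Lemma fine_massK nu : (fine (mass nu))%:E = mass nu.
Proof. by rewrite fineK //; exact: fin_num_measure. Qed.

Lemma mass_carried nu B : measurable B -> nu (~` B) = 0 -> nu B = mass nu.
Proof.
move=> mB nB; rewrite /mass -(setUv B) measureU ?setICr //; last exact: measurableC.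
by rewrite [X in _ + X](_ : _ = 0) ?adde0.
Qed.

Lemma integral_carried nu B f : measurable B -> nu (~` B) = 0 ->
  measurable_fun setT f -> (forall z, 0 <= f z) ->
  \int[nu]_z f z = \int[nu]_(z in B) f z.
Proof.
move=> mB nB mf f0; have mCB : measurable (~` B) by exact: measurableC.
rewrite -(setUv B) ge0_integral_setU //; last exact/disj_setPCl.
  by rewrite (null_set_integral (N := ~` B)) ?adde0 //; exact: measurable_funS mf.
by rewrite setUv.
Qed.

Lemma integral_carried_le nu B f (a : R) : measurable B -> nu (~` B) = 0 ->
  measurable_fun setT f -> (forall z, 0 <= f z) -> (0 <= a)%R ->
  (forall z, B z -> f z <= a%:E) -> \int[nu]_z f z <= a%:E * mass nu.
Proof.
move=> mB nB mf f0 a0 fa; rewrite (integral_carried mB nB mf f0).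
rewrite -(mass_carried mB nB) -integral_cst //.
by apply: ge0_le_integral => //; exact: measurable_funS mf.
Qed.

Lemma integral_carried_ge nu B f (a : R) : measurable B -> nu (~` B) = 0 ->
  measurable_fun setT f -> (forall z, 0 <= f z) -> (0 <= a)%R ->
  (forall z, B z -> a%:E <= f z) -> a%:E * mass nu <= \int[nu]_z f z.
Proof.
move=> mB nB mf f0 a0 fa; rewrite (integral_carried mB nB mf f0).
rewrite -(mass_carried mB nB) -integral_cst //.
by apply: ge0_le_integral => //; exact: measurable_funS mf.
Qed.

End CarriedMeasures.

Section HarmonicKernel.
Local Open Scope ereal_scope.
Context {R : realType} {d : measure_display} {X : measurableType d}.
Context {rho : X -> X -> R} {mu : set X -> X -> {finite_measure set X -> \bar R}}.
Hypothesis mu_kernel : harmonic_kernel rho mu.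

Lemma mass_epsA_le1 A z : rclosed rho A -> mass (epsA mu A z) <= 1.
Proof. by move=> cA; case: (mu_kernel cA cA z). Qed.

Lemma mass_epsA_in A z : rclosed rho A -> A z -> mass (epsA mu A z) = 1.
Proof.
move=> cA Az; case: (mu_kernel cA cA z) => _ _ h _ _.
by rewrite /mass /epsA h ?diracE ?in_setT //= => /(_ Az).
Qed.

(* By the balayage identity, eps_z^A is the eps_z^B-average of the eps_w^A,
   each of mass at most 1. *)
Lemma mass_epsA_le A B z : rclosed rho A -> rclosed rho B -> A `<=` B ->
  mass (epsA mu A z) <= mass (epsA mu B z).
Proof.
move=> cA cB AB; have CBA : ~` B `<=` ~` A by move=> w nBw /AB.
case: (mu_kernel cA cB z) => _ _ _ mmu balayage.
rewrite /mass /epsA (balayage CBA setT measurableT) /uintegral.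
set m := (X in integral X _ _).
apply: (@le_trans _ _ (integral m setT (cst 1))).
  apply: ge0_le_integral => //.
  - by move=> _ E mE; rewrite setTI; exact: mmu.
  - by move=> w _; exact: mass_epsA_le1.
rewrite integral_cst // mul1e /m /= /completed_measure_extension.
by rewrite measurable_mu_extE.
Qed.

End HarmonicKernel.

Section BorelSets.
Context {R : realType} {d : measure_display} {X : measurableType d}.
Context {rho : X -> X -> R}.
Hypothesis borel : @measurable d X = <<s ropen rho >>.

Lemma measurable_ropen A : ropen rho A -> measurable A.
Proof. by move=> oA; rewrite borel; exact: sub_sigma_algebra. Qed.

Lemma measurable_rclosed B : rclosed rho B -> measurable B.
Proof. by move=> cB; rewrite -(setCK B); apply: measurableC; exact: measurable_ropen. Qed.

End BorelSets.

Section Potentials.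
Local Open Scope ereal_scope.
Context {R : realType} {d : measure_display} {X : measurableType d}.
Context {G : X -> X -> \bar R}.
Hypothesis mG : measurable_fun setT (fun p : X * X => G p.1 p.2).
Hypothesis G_ge0 : forall x y, 0 <= G x y.
Implicit Types (m nu : {finite_measure set X -> \bar R}).

Let G_ge0' (p : X * X) : 0 <= G p.1 p.2. Proof. exact: G_ge0. Qed.

Lemma measurable_G y : measurable_fun setT (G y).
Proof. exact: measurableT_comp mG (pair1_measurable y). Qed.

Lemma Gpot_ge0 nu z : 0 <= Gpot G nu z.
Proof. by apply: integral_ge0 => w _; exact: G_ge0. Qed.

Lemma measurable_Gpot nu : measurable_fun setT (Gpot G nu).
Proof. exact: measurable_fun_fubini_tonelli_F _ mG G_ge0'. Qed.

Lemma Gpot_mscale (k : {nonneg R}) nu z :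
  Gpot G (mscale k nu) z = k%:num%:E * Gpot G nu z.
Proof. by rewrite /Gpot ge0_integral_mscale //; exact: measurable_G. Qed.

Lemma integral_Gpot_le (k : R) m nu : (0 <= k)%R ->
  (forall z w, G z w <= k%:E * G w z) ->
  \int[m]_z Gpot G nu z <= k%:E * \int[nu]_w Gpot G m w.
Proof.
move=> k0 Gsym; rewrite (fubini_tonelli _ mG G_ge0') -ge0_integralZl_EFin //; last 2 first.
- by move=> w _; exact: Gpot_ge0.
- exact: measurable_Gpot.
apply: ge0_le_integral => //.
- by move=> w _; apply: integral_ge0 => z _.
- exact: (@measurable_fun_fubini_tonelli_G _ _ X X R m _ mG G_ge0').
- apply: emeasurable_funM; [exact: measurable_cst | exact: measurable_Gpot].
move=> w _; rewrite /Gpot -ge0_integralZl_EFin //; last exact: measurable_G.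
apply: ge0_le_integral => //.
- exact: measurableT_comp mG (pair2_measurable w).
- by apply: emeasurable_funM; [exact: measurable_cst | exact: measurable_G].
Qed.

Lemma mass_le_reciprocity (k : R) A m nu : (0 <= k)%R ->
  (forall z w, G z w <= k%:E * G w z) -> measurable A -> m (~` A) = 0 ->
  (forall z, A z -> 1 <= Gpot G nu z) -> (forall w, Gpot G m w <= 1) ->
  mass m <= k%:E * mass nu.
Proof.
move=> k0 Gsym mA mA0 Gnu1 Gm1; rewrite -[mass m]mul1e.
apply: le_trans (integral_carried_ge mA mA0 (measurable_Gpot nu) (Gpot_ge0 nu) _ Gnu1) _ => //.
apply: le_trans (integral_Gpot_le m nu k0 Gsym) _.
apply: lee_wpmul2l; first by rewrite lee_fin.
rewrite /mass -[nu setT]mul1e -integral_cst //.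
by apply: ge0_le_integral => //; [move=> w _; exact: Gpot_ge0 | exact: measurable_Gpot].
Qed.

Lemma capacity_le (k : R) A nu : (0 <= k)%R ->
  (forall z w, G z w <= k%:E * G w z) -> measurable A ->
  (forall z, A z -> 1 <= Gpot G nu z) -> capacity G A <= k%:E * mass nu.
Proof.
move=> k0 Gsym mA Gnu1; apply: ub_ereal_sup => _ [m [mA0 Gm1] <-].
exact: mass_le_reciprocity mA mA0 Gnu1 Gm1.
Qed.

Lemma mass_le_capacity A m : m (~` A) = 0 -> (forall z, Gpot G m z <= 1) ->
  mass m <= capacity G A.
Proof. by move=> mA0 Gm1; apply: ereal_sup_ubound; exists m. Qed.

End Potentials.

Section Inequalities.
Context {R : realFieldType}.

Lemma G3_G3bar_ineq (c c1 c2 cD a a2 b n e G' : R) :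
  0 < c -> 0 < cD -> 0 < c1 -> 0 < c2 -> 0 < a -> 0 < a2 -> 0 < b -> 0 <= n ->
  c2^-1 * a2^-1 <= c * c * n -> c^-1 * b * n <= c1 * e ->
  G' <= c * cD * b -> a2 <= cD * a ->
  (c1 * c2 * c ^+ 4 * cD ^+ 2)^-1 * a^-1 * G' <= e.
Proof.
move=> c0 cD0 c10 c20 a0 a20 b0 n0 h1 h2 h3 h4.
rewrite -invfM ler_pdivrMl ?mulr_gt0 ?exprn_gt0 //.
move: h1; rewrite -invfM -[leLHS]mulr1 ler_pdivrMl ?mulr_gt0 // => h1.
move: h2; rewrite -mulrA ler_pdivrMl // => h2.
apply: (le_trans h3); rewrite -[leLHS]mulr1.
apply: le_trans (ler_wpM2l _ h1) _; first by rewrite !mulr_ge0 // ltW.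
have -> : c * cD * b * (c2 * a2 * (c * c * n)) =
  c * cD * c2 * (c * c) * (a2 * (b * n)) by ring.
have -> : c1 * c2 * c ^+ 4 * cD ^+ 2 * a * e =
  c * cD * c2 * (c * c) * ((cD * a) * (c * (c1 * e))) by ring.
apply: ler_wpM2l; first by rewrite !mulr_ge0 // ltW.
by apply: ler_pM => //; [exact: ltW | rewrite mulr_ge0 // ltW].
Qed.

Lemma G3bar_G3_ineq (c c1 c2 cD a a4 b b2 n G' : R) :
  0 < c -> 0 < cD -> 0 < c1 -> 0 < c2 -> 0 < a -> 0 < a4 -> 0 < b -> 0 <= n ->
  c2^-1 * a4^-1 * G' <= c * b2 * n -> b2 <= cD * b -> c^-1 * b <= G' ->
  a4 <= cD * (cD * a) ->
  (c1 * c2 * c ^+ 2 * cD ^+ 3)^-1 * a^-1 <= c1^-1 * n.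
Proof.
move=> c0 cD0 c10 c20 a0 a40 b0 n0 h1 hb h2 h3.
have k : 1 <= c * c * cD * c2 * a4 * n.
  have : b / (c * c2 * a4) <= c * cD * b * n.
    have -> : b / (c * c2 * a4) = c2^-1 * a4^-1 * (c^-1 * b).
      by field; rewrite !lt0r_neq0.
    apply: le_trans (ler_wpM2l _ h2) _; first by rewrite mulr_ge0 // invr_ge0 ltW.
    apply: (le_trans h1); apply: (ler_wpM2r n0).
    by rewrite -mulrA; apply: ler_wpM2l hb; exact: ltW.
  rewrite ler_pdivrMr ?mulr_gt0 // -[leLHS]mulr1.
  have -> : c * cD * b * n * (c * c2 * a4) = b * (c * c * cD * c2 * a4 * n) by ring.
  by rewrite ler_pM2l.
rewrite -!invfM -[leLHS]mulr1 ler_pdivrMl ?mulr_gt0 ?exprn_gt0 //.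
have -> : c1 * c2 * c ^+ 2 * cD ^+ 3 * a * (c1^-1 * n) =
  c * c * cD * c2 * (cD * (cD * a)) * n by field; exact: lt0r_neq0.
apply: le_trans k (ler_wpM2r n0 (ler_wpM2l _ h3)).
by rewrite !mulr_ge0 // ltW.
Qed.

End Inequalities.

Section DecreasingProfile.
Local Open Scope ereal_scope.
Context {R : realType} (g : R -> \bar R).
Hypothesis g_decr : forall r s : R, (0 <= r)%R -> (r < s)%R -> g s < g r.
Hypothesis g_gt0 : forall r : R, (0 <= r)%R -> 0 < g r.

Lemma g_le r s : (0 <= r)%R -> (r <= s)%R -> g s <= g r.
Proof. by move=> r0; rewrite le_eqVlt => /predU1P[->//|rs]; exact/ltW/g_decr. Qed.

Lemma g_fin_num r : (0 < r)%R -> g r \is a fin_num.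
Proof.
move=> r0; rewrite ge0_fin_numE; last exact/ltW/g_gt0/ltW.
exact: lt_le_trans (g_decr (lexx 0%R) r0) (leey _).
Qed.

Lemma fine_gK r : (0 < r)%R -> (fine (g r))%:E = g r.
Proof. by move=> r0; rewrite fineK // g_fin_num. Qed.

Lemma fine_g_gt0 r : (0 < r)%R -> (0 < fine (g r))%R.
Proof. by move=> r0; rewrite -lte_fin fine_gK //; exact/g_gt0/ltW. Qed.

End DecreasingProfile.

Section Proposition4p6.
Local Open Scope ereal_scope.
Context {R : realType} {d : measure_display} {X : measurableType d}.
Context (rho : X -> X -> R) (X0 : set X).
Context (mu : set X -> X -> {finite_measure set X -> \bar R}).
Context (G : X -> X -> \bar R) (g : R -> \bar R) (c cD c1 : R).
Hypothesis rho_metric : is_metric rho.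
Hypothesis borel : @measurable d X = <<s ropen rho >>.
Hypothesis mu_kernel : harmonic_kernel rho mu.
Hypothesis mG : measurable_fun setT (fun p : X * X => G p.1 p.2).
Hypothesis G_ge0 : forall x y, 0 <= G x y.
Hypothesis c1_ge1 : (1 <= c1)%R.
Hypothesis G1c1 : forall (U : set X) (x : X) (delta : R) (A : set X),
  Uclass rho X0 U -> U x -> (0 < delta)%R -> rclosed rho A -> A `<=` U ->
  exists (B : set X) (nu : {finite_measure set X -> \bar R}),
    [/\ rclosed rho B, B `<=` U, rnbhd rho A B & nu (~` B) = 0] /\
    mass (epsA mu B x) - delta%:E < c1%:E * mass (epsA mu A x) /\
    (forall y, mass (epsA mu A y) <= Gpot G nu y /\
               Gpot G nu y <= c1%:E * mass (epsA mu B y)).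
Hypothesis g_decr : forall r s : R, (0 <= r)%R -> (r < s)%R -> g s < g r.
Hypothesis g_gt0 : forall r : R, (0 <= r)%R -> 0 < g r.
Hypothesis c_ge1 : (1 <= c)%R.
Hypothesis cD_ge1 : (1 <= cD)%R.
Hypothesis g_doubling : forall r : R, (0 < r)%R -> g (r / 2) <= cD%:E * g r.
Hypothesis G_g : forall x y : X,
  (c^-1)%:E * g (rho x y) <= G x y /\ G x y <= c%:E * g (rho x y).

Implicit Types nu : {finite_measure set X -> \bar R}.

Let c_gt0 : (0 < c)%R. Proof. exact: lt_le_trans ltr01 c_ge1. Qed.
Let cD_gt0 : (0 < cD)%R. Proof. exact: lt_le_trans ltr01 cD_ge1. Qed.
Let c1_gt0 : (0 < c1)%R. Proof. exact: lt_le_trans ltr01 c1_ge1. Qed.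

Lemma G_quasi_sym z w : G z w <= (c * c)%:E * G w z.
Proof.
apply: le_trans (G_g z w).2 _; rewrite EFinM -muleA.
apply: lee_wpmul2l; first by rewrite lee_fin ltW.
rewrite -[g _]mul1e -(mulfV (lt0r_neq0 c_gt0)) EFinM -muleA (rhoC rho_metric).
by apply: lee_wpmul2l; [rewrite lee_fin ltW | exact: (G_g w z).1].
Qed.

Lemma fine_g_half r : (0 < r)%R -> (fine (g (r / 2)) <= cD * fine (g r))%R.
Proof.
move=> r0; rewrite -lee_fin EFinM !fine_gK ?divr_gt0 //; exact: g_doubling.
Qed.

Lemma Gpot_ge_dist nu B y t : measurable B -> nu (~` B) = 0 -> (0 < t)%R ->
  (forall z, B z -> (rho y z <= t)%R) ->
  (c^-1 * fine (g t))%:E * mass nu <= Gpot G nu y.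
Proof.
move=> mB nuB t0 Bt; apply: integral_carried_ge mB nuB _ _ _ _ => //.
- exact: measurable_G.
- by rewrite mulr_ge0 ?invr_ge0 ?ltW ?fine_g_gt0.
move=> z /Bt yz; apply: le_trans (G_g y z).1; rewrite EFinM fine_gK //.
apply: lee_wpmul2l; first by rewrite lee_fin invr_ge0 ltW.
exact/g_le/yz/rho_ge0.
Qed.

Lemma Gpot_le_dist nu B y t : measurable B -> nu (~` B) = 0 -> (0 < t)%R ->
  (forall z, B z -> (t <= rho y z)%R) ->
  Gpot G nu y <= (c * fine (g t))%:E * mass nu.
Proof.
move=> mB nuB t0 Bt; apply: integral_carried_le mB nuB _ _ _ _ => //.
- exact: measurable_G.
- by rewrite mulr_ge0 ?ltW ?fine_g_gt0.
move=> z /Bt yz; apply: le_trans (G_g y z).2 _; rewrite EFinM fine_gK //.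
by apply: lee_wpmul2l; [rewrite lee_fin ltW | exact/g_le/yz/ltW].
Qed.

Lemma G1_ball x t : (0 < t)%R -> rclosure rho (rball rho x t) `<=` X0 ->
  exists B (nu : {finite_measure set X -> \bar R}),
    [/\ rclosed rho B, B `<=` rball rho x t, nu (~` B) = 0 &
    forall z, mass (epsA mu (rclosure rho (rball rho x (t / 2))) z) <= Gpot G nu z /\
              Gpot G nu z <= c1%:E * mass (epsA mu B z)].
Proof.
move=> t0 tX0; have t2t : (t / 2 < t)%R by lra.
have Ut : Uclass rho X0 (rball rho x t) by split; [exact: rball_open | ].
have [B [nu [[cB BU _ nuB] [_ hnu]]]] := G1c1 (delta := 1%R) Ut
  (rball_center rho_metric x t0) ltr01 (rclosure_closed rho_metric _)
  (rclosure_rball_sub rho_metric t2t).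
by exists B, nu.
Qed.

Lemma G_le_g_twice y x : (0 < rho x y)%R ->
  G y x <= (c * cD * fine (g (2 * rho x y)))%:E.
Proof.
move=> u0; have u2 : (0 < 2 * rho x y)%R by rewrite mulr_gt0.
apply: le_trans (G_g y x).2 _; rewrite (rhoC rho_metric) !EFinM -muleA fine_gK //.
apply: lee_wpmul2l; first by rewrite lee_fin ltW.
have u_half : (2 * rho x y / 2 = rho x y)%R by rewrite mulrC mulKf.
by rewrite -[X in g X <= _]u_half; exact: g_doubling.
Qed.

Lemma G_fin_num y x : (0 < rho x y)%R -> G y x \is a fin_num.
Proof.
move=> u0; rewrite ge0_fin_numE //; apply: le_lt_trans (G_g y x).2 _.
by rewrite (rhoC rho_metric y x) -[g _]fine_gK // -EFinM ltey.
Qed.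

Lemma capacity_le_Gpot U A nu : ropen rho U -> rclosed rho A -> U `<=` A ->
  (forall z, mass (epsA mu A z) <= Gpot G nu z) ->
  capacity G U <= (c * c)%:E * mass nu.
Proof.
move=> oU cA UA Gnu; apply: (capacity_le mG G_ge0 _ G_quasi_sym).
- by rewrite mulr_ge0 // ltW.
- exact: measurable_ropen borel _ oU.
by move=> z Uz; rewrite -(mass_epsA_in mu_kernel cA (UA z Uz)).
Qed.

Lemma capacity_ge_Gpot A B nu : ropen rho A -> rclosed rho B -> B `<=` A ->
  nu (~` B) = 0 -> (forall z, Gpot G nu z <= c1%:E * mass (epsA mu B z)) ->
  (c1^-1)%:E * mass nu <= capacity G A.
Proof.
move=> oA cB BA nuB Gnu; have c1V_ge0 : (0 <= c1^-1)%R by rewrite invr_ge0 ltW.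
have nuA : nu (~` A) = 0.
  apply/eqP; rewrite eq_le measure_ge0 andbT -nuB.
  apply: le_measure; rewrite ?inE; last by move=> w nAw Bw; exact/nAw/BA.
  - exact/measurableC/(measurable_ropen borel).
  - exact/measurableC/(measurable_rclosed borel).
apply: le_trans (mass_le_capacity (m := mscale (NngNum c1V_ge0) nu) _ _) => //.
  by change ((c1^-1)%:E * nu (~` A) = 0); rewrite nuA mule0.
move=> z; rewrite (Gpot_mscale mG G_ge0) /=.
apply: le_trans (lee_wpmul2l _ (Gnu z)) _; first by rewrite lee_fin.
rewrite muleA -EFinM mulVf ?mul1e; last exact: lt0r_neq0.
by have := mass_epsA_le1 mu_kernel z cB.
Qed.

Lemma G3_G3bar : G3 rho X0 G g -> G3bar rho X0 mu G g.
Proof.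
case=> c2 [c2_ge1 G3c2]; exists (c1 * c2 * c ^+ 4 * cD ^+ 2)%R; split.
  by rewrite !mulr_ege1 // exprn_ege1.
move=> x r y X0x r0 rR0 y_out.
have [s rs sX0] := R0_gt rR0.
have [B [nu [cB BU nuB Gnu]]] :=
  G1_ball r0 (subset_trans (rclosure_rballS (ltW rs)) sX0).
have mB := measurable_rclosed borel cB.
set u := rho x y; have ru : (r <= u)%R by rewrite leNgt; apply/negP.
have [r2 u2] : (0 < r / 2)%R /\ (0 < 2 * u)%R by split; lra.
have cap_nu : (c2^-1 * (fine (g (r / 2)))^-1)%:E <= (c * c)%:E * mass nu.
  apply: le_trans (G3c2 x (r / 2)%R X0x r2 _) _.
    by apply: le_lt_trans rR0; rewrite lee_fin; lra.
  apply: capacity_le_Gpot (rball_open rho_metric _ _) (rclosure_closed rho_metric _) _ _.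
    exact: subset_rclosure.
  by move=> z; exact: (Gnu z).1.
have Gnu_y : (c^-1 * fine (g (2 * u)))%:E * mass nu
    <= c1%:E * mass (epsA mu (rclosure rho (rball rho x r)) y).
  apply: le_trans (Gpot_ge_dist (y := y) mB nuB u2 _) _.
    move=> z /BU; rewrite /rball /= => xz.
    by have := rho_triangle rho_metric y x z; rewrite (rhoC rho_metric y x) -/u; lra.
  apply: le_trans (Gnu y).2 _; apply: lee_wpmul2l; first by rewrite lee_fin ltW.
  apply: (mass_epsA_le mu_kernel y cB (rclosure_closed rho_metric _)).
  by move=> z /BU /(subset_rclosure rho_metric).
have Gyx := G_le_g_twice (lt_le_trans r0 ru).
have Gyx_fin := G_fin_num (lt_le_trans r0 ru).
rewrite -(fineK Gyx_fin) -(fine_massK (epsA _ _ y)) in Gyx Gnu_y *.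
rewrite -(fine_massK nu) -!EFinM !lee_fin in cap_nu Gnu_y Gyx *.
apply: G3_G3bar_ineq cap_nu Gnu_y Gyx (fine_g_half r0) => //.
- exact: lt_le_trans ltr01 c2_ge1.
1-3: exact: fine_g_gt0.
- exact/fine_ge0/measure_ge0.
Qed.

Lemma G3bar_G3 : X0 <> setT -> G3bar rho X0 mu G g -> G3 rho X0 G g.
Proof.
move=> /eqP/setTPn[y0 y0_out] [c2 [c2_ge1 G3bar_c2]].
exists (c1 * c2 * c ^+ 2 * cD ^+ 3)%R; split; first by rewrite !mulr_ege1 // exprn_ege1.
move=> x r X0x r0 rR0.
have [s rs sX0] := R0_gt rR0.
have [r2 r4 r2s] : [/\ (0 < r / 2)%R, (0 < r / 2 / 2)%R & (r / 2 <= s)%R].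
  by split; lra.
have [B [nu [cB BU nuB Gnu]]] :=
  G1_ball r2 (subset_trans (rclosure_rballS r2s) sX0).
have mB := measurable_rclosed borel cB.
set u := rho x y0; have su : (s <= u)%R.
  rewrite leNgt; apply/negP => us; apply/y0_out/sX0/(subset_rclosure rho_metric).
  by rewrite /rball /=.
have [u0 u2] : (0 < u)%R /\ (0 < u / 2)%R by split; lra.
have Gnu_y0 : (c2^-1 * (fine (g (r / 2 / 2)))^-1)%:E * G y0 x
    <= (c * fine (g (u / 2)))%:E * mass nu.
  apply: le_trans (G3bar_c2 x _ y0 X0x r4 _ _) _.
  - by apply: le_lt_trans rR0; rewrite lee_fin; lra.
  - by rewrite /rball /= -/u; lra.
  apply: le_trans (Gnu y0).1 (Gpot_le_dist mB nuB u2 _) => z /BU.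
  rewrite /rball /= => xz; have := rho_triangle rho_metric x z y0.
  by rewrite (rhoC rho_metric z y0) -/u; lra.
have Gy0x : (c^-1 * fine (g u))%:E <= G y0 x.
  by rewrite EFinM fine_gK // /u (rhoC rho_metric x y0); exact: (G_g y0 x).1.
have Gy0x_fin := G_fin_num u0.
have Br : B `<=` rball rho x r by move=> z /BU; rewrite /rball /=; lra.
apply: le_trans (capacity_ge_Gpot (rball_open rho_metric x r) cB Br nuB (fun z => (Gnu z).2)).
rewrite -(fineK Gy0x_fin) -(fine_massK nu) -!EFinM !lee_fin in Gnu_y0 Gy0x *.
apply: G3bar_G3_ineq Gnu_y0 (fine_g_half u0) Gy0x _ => //.
- exact: lt_le_trans ltr01 c2_ge1.
1-3: exact: fine_g_gt0.
- exact/fine_ge0/measure_ge0.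
apply: le_trans (fine_g_half r2) _; rewrite ler_pM2l //.
exact: fine_g_half.
Qed.

End Proposition4p6.

Unset Implicit Arguments.

Theorem proposition4p6 (R : realType) (d : measure_display) (X : measurableType d)
  (rho : X -> X -> R) (X0 : set X)
  (mu : set X -> X -> {finite_measure set X -> \bar R})
  (G : X -> X -> \bar R) (g : R -> \bar R) (c cD M0 alpha0 : R) :
  is_metric rho -> rseparable rho ->
  (@measurable d X = <<s ropen rho >>) ->
  ropen rho X0 ->
  harmonic_kernel rho mu ->
  measurable_fun setT (fun p : X * X => G p.1 p.2) ->
  (forall x y, (0 < G x y)%E) ->
  G1 rho X0 mu G ->
  G2 rho G g c cD M0 alpha0 ->
  (G3 rho X0 G g -> G3bar rho X0 mu G g) /\
  (X0 <> setT -> G3bar rho X0 mu G g -> G3 rho X0 G g).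
Proof.
move=> rho_metric _ borel _ mu_kernel mG G_gt0 [c1 [c1_ge1 G1c1]]
  [[g_decr _ g_gt0] [[c_ge1 cD_ge1 _ _]] [g_doubling _ G_g]].
have G_ge0 x y : (0 <= G x y)%E by exact: ltW.
split=> [|X0_proper].
- by apply: (G3_G3bar (c := c) (cD := cD) (c1 := c1)).
- by apply: (G3bar_G3 (c := c) (cD := cD) (c1 := c1)).
Qed.
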